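(* Let $H$ and $G$ be graphs with $G\in\operatorname{obs}^\ast(H)$. Then, up to isomorphism, \[\operatorname{obs}(G)=(\operatorname{obs}(H)\setminus\{G\})\cup\operatorname{obs}^\ast(G).\]
   Context: All graphs are finite, simple and loopless. A full-homomorphism $\varphi\colon G\to H$ is a map $V(G)\to V(H)$ such that for all $x,y\in V(G)$, $xy\in E(G)$ if and only if $\varphi(x)\varphi(y)\in E(H)$. A full $H$-colouring of $G$ is a full-homomorphism $G\to H$. A minimal $H$-obstruction is a graph $G$ that admits no full $H$-colouring while every proper induced subgraph of $G$ admits one; $\operatorname{obs}(H)$ denotes the set of minimal $H$-obstructions (up to isomorphism), and $\operatorname{obs}^\ast(H)$ the set of minimal $H$-obstructions on exactly $|V(H)|+1$ vertices. *)

From mathcomp Require Import all_boot.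
Set Implicit Arguments. Unset Strict Implicit. Unset Printing Implicit Defensive.

Record sgraph := SGraph {
  vert :> finType;
  adj : rel vert;
  adj_sym : symmetric adj;
  adj_irr : irreflexive adj }.

Definition full_hom (G H : sgraph) (f : G -> H) : Prop :=
  forall x y : G, adj x y = adj (f x) (f y).

Definition full_colourable (G H : sgraph) : Prop :=
  exists f : G -> H, full_hom f.

Definition induced_full_colourable (G : sgraph) (S : {set G}) (H : sgraph) : Prop :=
  exists f : {x : G | x \in S} -> H,
    forall x y : {x : G | x \in S}, adj (val x) (val y) = adj (f x) (f y).

Definition min_obs (H G : sgraph) : Prop :=
  ~ full_colourable G H /\
  forall S : {set G}, S != setT -> induced_full_colourable S H.

Definition min_obs_star (H G : sgraph) : Prop :=
  min_obs H G /\ #|G| = #|H|.+1.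

Definition graph_iso (G1 G2 : sgraph) : Prop :=
  exists f : G1 -> G2, bijective f /\ full_hom f.

(* A minimal obstruction is point-determining (twins could be identified), so by
   Sumner's theorem it has a vertex v whose deletion leaves a point-determining
   graph; full homomorphisms out of point-determining graphs are injective.  For
   G in obs*(H) this makes the H-colouring of G - v a bijection, whence H -> G.
   Consequently every G-obstruction all of whose proper subgraphs are
   H-colourable is an H-obstruction; any other one has a proper subgraph mapping
   onto G, so it has |G| + 1 vertices.  Conversely, a full homomorphism between
   two minimal H-obstructions is always an isomorphism. *)
From Stdlib Require Import Classical.
From mathcomp Require Import all_boot.
Set Implicit Arguments. Unset Strict Implicit. Unset Printing Implicit Defensive.

Definition induced (G : sgraph) (S : {set G}) : sgraph :=
  @SGraph {x : G | x \in S} (fun a b => adj (val a) (val b))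
    (fun a b => adj_sym (val a) (val b)) (fun a => adj_irr (val a)).

Lemma card_induced (G : sgraph) (S : {set G}) : #|induced S| = #|S|.
Proof. by rewrite card_sig; apply: eq_card => x; rewrite !inE. Qed.

Lemma setC1_proper (T : finType) (x : T) : [set~ x] != setT.
Proof. by apply/negP => /eqP/setP/(_ x); rewrite !inE eqxx. Qed.

Lemma full_colourable_trans (X Y Z : sgraph) :
  full_colourable X Y -> full_colourable Y Z -> full_colourable X Z.
Proof. by move=> [f hf] [g hg]; exists (g \o f) => a b /=; rewrite hf hg. Qed.

Definition point_determining (G : sgraph) : Prop :=
  forall x y : G, (forall z, adj x z = adj y z) -> x = y.

(* [G - v] is point-determining, phrased inside [G]. *)
Definition point_determining_del (G : sgraph) (v : G) : Prop :=
  forall x y : G, x != v -> y != v ->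
    (forall z, z != v -> adj x z = adj y z) -> x = y.

Lemma min_obs_point_determining (H X : sgraph) :
  min_obs H X -> point_determining X.
Proof.
move=> [nX hX] x y hxy; apply: NNPP => nxy.
have [g hg] := hX _ (setC1_proper x).
pose retract z := if z == x then y else z.
have r_in z : retract z \in [set~ x].
  by rewrite /retract; case: eqP => [_|/eqP]; rewrite !inE // eq_sym; apply/eqP.
have adj_r a b : adj a b = adj (retract a) (retract b).
  rewrite /retract; case: (eqVneq a x) => [->|ax]; case: (eqVneq b x) => [->|bx] //.
  - by rewrite !adj_irr.
  - by rewrite adj_sym hxy adj_sym.
apply: nX; exists (fun z => g (Sub (retract z) (r_in z))) => a b.
by rewrite -hg adj_r.
Qed.

Lemma full_hom_injective_del (G H : sgraph) (v : G) (g : induced [set~ v] -> H) :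
  point_determining_del v -> full_hom g -> injective g.
Proof.
move=> pdv hg a b gab; apply: val_inj; apply: pdv.
- by have := valP a; rewrite !inE.
- by have := valP b; rewrite !inE.
move=> z zv; have z_in : z \in [set~ v] by rewrite !inE.
have := hg a (Sub z z_in); have := hg b (Sub z z_in).
by rewrite /= gab => -> ->.
Qed.

Section Sumner.

Variable G : sgraph.
Hypothesis G_pd : point_determining G.

Definition separates (v x y : G) : Prop :=
  [/\ x != y, adj v x, ~~ adj v y & forall z, z != v -> adj x z = adj y z].

Definition nbhd (u : G) : {set G} := [set z | adj u z].

Lemma separates_of_not_pd_del (v : G) :
  ~ point_determining_del v -> exists x y, separates v x y.
Proof.
move=> npd.
have [x [y [xv yv twins xy]]] : exists x y, [/\ x != v, y != v,
    forall z, z != v -> adj x z = adj y z & x <> y].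
  apply: NNPP => ne; apply: npd => x y xv yv tw; apply: NNPP => xy.
  by apply: ne; exists x, y.
have adj_v : adj v x != adj v y.
  apply/negP => /eqP e; apply: xy; apply: G_pd => z.
  by case: (eqVneq z v) => [->|zv]; [rewrite !(adj_sym _ v) | rewrite twins].
case vx : (adj v x); case vy : (adj v y); rewrite vx vy // in adj_v.
- by exists x, y; split; rewrite ?vx ?vy //; apply/eqP.
- exists y, x; split; rewrite ?vx ?vy //.
  + by apply/eqP => e; apply: xy.
  + by move=> z zv; rewrite twins.
Qed.

Lemma separates_head (v x y a b : G) : separates v x y -> separates x a b -> a = v.
Proof.
move=> [xy vx vy tv] [ab xa xb tx]; apply: NNPP => /eqP av.
have ya : adj y a by rewrite -tv.
have b_y : adj b y by rewrite -tx 1?eq_sym // adj_sym.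
have bv : b != v by apply: (contraNneq _ vy) => <-.
by move: (tv b bv); rewrite (negbTE xb) (adj_sym y b) b_y.
Qed.

Lemma separates_tail (v x y a d : G) : separates v x y -> separates y a d -> d = v.
Proof.
move=> [xy vx vy tv] [ad ya yd ty]; apply: NNPP => /eqP dv.
have av : a != v by apply: (contraNneq _ vy) => <-; rewrite adj_sym.
have dx : adj d x by rewrite -ty // adj_sym tv // adj_sym.
by move: (tv d dv); rewrite (adj_sym x d) dx (negbTE yd).
Qed.

Lemma separates_nbhd_lt (v x y : G) : separates v x y -> #|nbhd y| < #|nbhd x|.
Proof.
move=> [xy vx vy tv]; apply: proper_card; apply/properP; split.
  apply/subsetP => z; rewrite !inE => yz.
  have zv : z != v by apply: (contraNneq _ vy) => <-; rewrite adj_sym.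
  by rewrite tv.
by exists v; rewrite !inE adj_sym.
Qed.

Lemma separates_step (v x y : G) :
  (forall u : G, ~ point_determining_del u) -> separates v x y ->
  exists b c, separates b c x.
Proof.
move=> npd vxy; have [a [b xab]] := separates_of_not_pd_del (npd x).
have av := separates_head vxy xab; subst a.
have [c [d bcd]] := separates_of_not_pd_del (npd b).
by exists b, c; rewrite -(separates_tail xab bcd).
Qed.

(* Were there no such vertex, iterating [separates_step] would produce separated
   pairs whose last vertex has arbitrarily large neighbourhood. *)
Theorem sumner (v0 : G) : exists v : G, point_determining_del v.
Proof.
apply: NNPP => none.
have npd (u : G) : ~ point_determining_del u by move=> ?; apply: none; exists u.
have grow k : exists v x y, separates v x y /\ k <= #|nbhd y|.
  elim: k => [|k [v [x [y [vxy le_k]]]]].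
    by have [x [y v0xy]] := separates_of_not_pd_del (npd v0); exists v0, x, y.
  have [b [c bcx]] := separates_step npd vxy.
  exists b, c, x; split => //.
  exact: leq_ltn_trans le_k (separates_nbhd_lt vxy).
have [v [x [y [_ big]]]] := grow #|G|.+1.
by move: (leq_trans big (max_card (mem (nbhd y)))); rewrite ltnn.
Qed.

End Sumner.

Lemma min_obs_card_leS (K F : sgraph) : min_obs K F -> #|F| <= #|K|.+1.
Proof.
move=> hF; case: (posnP #|F|) => [-> //|/card_gt0P [v0 _]].
have [v pdv] := sumner (min_obs_point_determining hF) v0.
have [g hg] := hF.2 _ (setC1_proper v).
have := leq_card _ (full_hom_injective_del pdv hg).
by rewrite card_induced cardsC1; case: #|F|.
Qed.

Lemma min_obs_full_hom_surj (K G X : sgraph) (f : X -> G) :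
  min_obs K G -> full_hom f -> ~ full_colourable X K -> forall u, exists x, f x = u.
Proof.
move=> [_ hG] hf nX u; apply: NNPP => nu.
have [g hg] := hG _ (setC1_proper u).
have f_in x : f x \in [set~ u] by rewrite !inE; apply/eqP => e; apply: nu; exists x.
by apply: nX; exists (fun x => g (Sub (f x) (f_in x))) => a b; rewrite -hg /= hf.
Qed.

Lemma full_hom_section (X G : sgraph) (f : X -> G) :
  full_hom f -> (forall u, exists x, f x = u) ->
  exists s : G -> X, full_hom s /\ cancel s f.
Proof.
move=> hf f_surj.
have f_surjb u : exists x, f x == u by have [x e] := f_surj u; exists x; apply/eqP.
have sK : cancel (fun u => xchoose (f_surjb u)) f.
  by move=> u; apply/eqP; exact: (xchooseP (f_surjb u)).
by exists (fun u => xchoose (f_surjb u)); split => // a b; rewrite hf !sK.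
Qed.

Lemma min_obs_card_le (K G X : sgraph) (f : X -> G) :
  min_obs K G -> full_hom f -> ~ full_colourable X K -> #|G| <= #|X|.
Proof.
move=> hG hf nX; have [s [_ sK]] := full_hom_section hf (min_obs_full_hom_surj hG hf nX).
exact: leq_card _ (can_inj sK).
Qed.

Lemma min_obs_full_hom_bij (K F G : sgraph) (f : F -> G) :
  min_obs K F -> min_obs K G -> full_hom f -> bijective f.
Proof.
move=> hF hG hf.
have [s [hs sK]] := full_hom_section hf (min_obs_full_hom_surj hG hf hF.1).
case: (eqVneq [set s u | u in G] setT) => [s_onto | s_proper].
  exists s => // x; have : x \in [set s u | u in G] by rewrite s_onto inE.
  by case/imsetP => u _ ->; rewrite sK.
have [g hg] := hF.2 _ s_proper; case: (proj1 hG).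
have s_in u : s u \in [set s u | u in G] by rewrite imset_f.
by exists (fun u => g (Sub (s u) (s_in u))) => a b; rewrite -hg /= -hs.
Qed.

Lemma min_obs_star_colourable (H G : sgraph) :
  min_obs_star H G -> full_colourable H G.
Proof.
move=> [hG cardG]; have /card_gt0P [v0 _] : 0 < #|G| by rewrite cardG.
have [v pdv] := sumner (min_obs_point_determining hG) v0.
have [g hg] := hG.2 _ (setC1_proper v).
have card_le : #|H| <= #|induced [set~ v]| by rewrite card_induced cardsC1 cardG.
have [h gK hK] := inj_card_bij (full_hom_injective_del pdv hg) card_le.
by exists (fun p => val (h p)) => p q; rewrite -{1}(hK p) -{1}(hK q) -hg.
Qed.

Section ObsStar.

Variables H G : sgraph.
Hypothesis G_obs_star : min_obs_star H G.

Lemma min_obs_obs_star_split (F : sgraph) :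
  min_obs G F -> (min_obs H F /\ ~ graph_iso F G) \/ min_obs_star G F.
Proof.
move=> hF; have [nF sF] := hF.
have [sFH | nsFH] :=
  classic (forall S : {set F}, S != setT -> induced_full_colourable S H).
  left; split; last by move=> [f [_ hf]]; apply: nF; exists f.
  split=> // cFH; apply: nF.
  exact: full_colourable_trans cFH (min_obs_star_colourable G_obs_star).
have [S /(imply_to_and (S != setT)) [S_proper nSH]] := not_all_ex_not _ _ nsFH.
right; split=> //; have [g hg] := sF S S_proper.
have le_GS := @min_obs_card_le _ _ (induced S) g (proj1 G_obs_star) hg nSH.
have lt_SF : #|S| < #|F| by rewrite -cardsT proper_card ?properT.
apply/eqP; rewrite eqn_leq min_obs_card_leS //=.
by rewrite card_induced in le_GS; exact: leq_ltn_trans le_GS lt_SF.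
Qed.

Lemma min_obs_obs_star_lift (F : sgraph) :
  min_obs H F -> ~ graph_iso F G -> min_obs G F.
Proof.
move=> hF not_iso; split.
  move=> [f hf]; apply: not_iso; exists f; split=> //.
  exact: min_obs_full_hom_bij hF (proj1 G_obs_star) hf.
move=> S S_proper.
have S_col : full_colourable (induced S) H := hF.2 S S_proper.
exact: full_colourable_trans S_col (min_obs_star_colourable G_obs_star).
Qed.

End ObsStar.

Theorem theorem3p5 (H G : sgraph) :
  min_obs_star H G ->
  forall F : sgraph,
    min_obs G F <->
    ((min_obs H F /\ ~ graph_iso F G) \/ min_obs_star G F).
Proof.
move=> G_obs_star F; split; first exact: min_obs_obs_star_split.
case=> [[hF not_iso] | [hF _] //].
exact: (min_obs_obs_star_lift G_obs_star hF not_iso).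
Qed.
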